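(* Let $S$ be a closed hyperbolic surface and $\gamma \subset S$ a closed geodesic. Let $\alpha,\beta$ be two complete geodesics in the hyperbolic plane $\mathbb{H}^2$ (the universal cover of $S$), both projecting to $\gamma$ under the covering projection, which cross transversely at a point $p$ that projects to a self-intersection of $\gamma$. Let $\epsilon>0$ be such that $8\epsilon$ is less than the length of the shortest nontrivial closed curve on $S$, and let $\alpha_\epsilon,\beta_\epsilon$ be the $\epsilon$-trap for $p$. Then $\operatorname{length}(\alpha_\epsilon) < \operatorname{length}(\gamma) + 4\epsilon$, and similarly $\operatorname{length}(\beta_\epsilon) < \operatorname{length}(\gamma) + 4\epsilon$.
   Context: For two complete geodesics $\alpha,\beta$ in $\mathbb{H}^2$ crossing transversely at $p$ and $\epsilon>0$, $\alpha_\epsilon$ denotes the subset (segment) of $\alpha$ consisting of points lying in the $2\epsilon$-neighborhood of $\beta$, and similarly $\beta_\epsilon$ is the segment of $\beta$ in the $2\epsilon$-neighborhood of $\alpha$. The pair $\alpha_\epsilon,\beta_\epsilon$ is called the $\epsilon$-trap for $p$. *)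

From Stdlib Require Import Reals Lra.
Open Scope R_scope.

(** Upper half-plane model of H^2: points (x, y) with y > 0. *)
Definition pt := (R * R)%type.
Definition inH (z : pt) : Prop := 0 < snd z.

Definition hdist (z w : pt) : R :=
  let '(x, y) := z in let '(u, v) := w in
  2 * ln ((sqrt ((x - u)^2 + (y - v)^2) + sqrt ((x - u)^2 + (y + v)^2))
          / (2 * sqrt (y * v))).

(** 2x2 real matrices, acting on H^2 by Moebius transformations. *)
Record mat := Mat { ma : R; mb : R; mc : R; md : R }.
Definition det (h : mat) : R := ma h * md h - mb h * mc h.
Definition mid : mat := Mat 1 0 0 1.
Definition mneg_id : mat := Mat (-1) 0 0 (-1).
Definition mmul (g h : mat) : mat :=
  Mat (ma g * ma h + mb g * mc h) (ma g * mb h + mb g * md h)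
      (mc g * ma h + md g * mc h) (mc g * mb h + md g * md h).
(** inverse of a determinant-one matrix *)
Definition minv (h : mat) : mat := Mat (md h) (- mb h) (- mc h) (ma h).

(** z = x + i y  |->  (a z + b) / (c z + d) *)
Definition act (h : mat) (z : pt) : pt :=
  let '(x, y) := z in
  let a := ma h in let b := mb h in let c := mc h in let d := md h in
  let n := (c * x + d)^2 + (c * y)^2 in
  ((a * c * (x^2 + y^2) + (a * d + b * c) * x + b * d) / n,
   (a * d - b * c) * y / n).

(** A nontrivial element of PSL(2,R) represented by h. *)
Definition nontrivial (h : mat) : Prop := h <> mid /\ h <> mneg_id.

(** Gamma is a Fuchsian group uniformizing a closed hyperbolic surface:
    a discrete subgroup of SL(2,R) acting freely (torsion-free) and
    cocompactly on H^2.  The surface is S = H^2 / Gamma. *)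
Definition closed_surface_group (Gamma : mat -> Prop) : Prop :=
  (forall h, Gamma h -> det h = 1) /\
  Gamma mid /\
  (forall g h, Gamma g -> Gamma h -> Gamma (mmul g h)) /\
  (forall h, Gamma h -> Gamma (minv h)) /\
  (exists delta, 0 < delta /\ forall h, Gamma h ->
      Rabs (ma h - 1) < delta -> Rabs (mb h) < delta ->
      Rabs (mc h) < delta -> Rabs (md h - 1) < delta -> h = mid) /\
  (forall h, Gamma h -> nontrivial h -> forall z, inH z -> act h z <> z) /\
  (exists z0 r, inH z0 /\ forall z, inH z ->
      exists h, Gamma h /\ hdist (act h z) z0 <= r).

Definition complete_geodesic (G : pt -> Prop) : Prop :=
  exists c : R -> pt,
    (forall t, inH (c t)) /\
    (forall s t, hdist (c s) (c t) = Rabs (s - t)) /\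
    (forall z, G z <-> exists t, z = c t).

(** The complete geodesic G projects to the closed geodesic determined by
    g in Gamma: G is the axis of a conjugate h g h^-1 (h in Gamma), i.e. a
    complete geodesic mapped onto itself by h g h^-1. *)
Definition projects_to (Gamma : mat -> Prop) (g : mat) (G : pt -> Prop) : Prop :=
  complete_geodesic G /\
  exists h, Gamma h /\
    forall z, inH z -> (G z <-> G (act (mmul h (mmul g (minv h))) z)).

(** L is the length of the closed geodesic of S in the free homotopy class
    of g: the (attained) minimal displacement of g on H^2. *)
Definition transl_length (g : mat) (L : R) : Prop :=
  (forall z, inH z -> L <= hdist z (act g z)) /\
  (exists z, inH z /\ hdist z (act g z) = L).

(** Every nontrivial closed curve on S = H^2/Gamma has length > l
    (i.e. l is less than the length of the shortest one). *)
Definition systole_gt (Gamma : mat -> Prop) (l : R) : Prop :=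
  forall h, Gamma h -> nontrivial h -> forall z, inH z -> l < hdist z (act h z).

Definition trap (alpha beta : pt -> Prop) (eps : R) (x : pt) : Prop :=
  alpha x /\ exists b, beta b /\ hdist x b < 2 * eps.

(** length(A) < bound, for a geodesic segment A: its length is its diameter. *)
Definition seg_length_lt (A : pt -> Prop) (bound : R) : Prop :=
  exists M, M < bound /\ forall x y, A x -> A y -> hdist x y <= M.

From Stdlib Require Import Reals Lra Psatz Classical.
Open Scope R_scope.

(* Lift so that alpha is the imaginary axis, p = i, and beta the image of the axis under a rotation
   by 2 phi about i, orienting beta so that |sin 2 phi| >= |sin phi|.  Each line is the axis of a
   deck transformation translating it by L (ea, eb).  If alpha(t), |t| >= L/2, were 2 eps-close to
   beta, then sinh d >= |sin 2 phi| sinh |t| and sinh (delta/2) = |sin phi| sinh (L/2) force the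
   distance delta between alpha(L/2) and beta(L/2) below 4 eps.  By the symmetry of the crossing
   beta(-L/2) and alpha(-L/2) are also delta apart, so ea^-1 eb moves alpha(-L/2) by at most
   2 delta < 8 eps.  Below the systole ea^-1 eb is trivial, and then alpha(L) = beta(L) would be a
   second intersection point.  Hence the trap lies in alpha((-L/2, L/2)), of diameter at most L. *)

(* [cosh_gap d = 2 cosh d - 2]; the distance formula reads [cosh_gap (hdist z w) = qdist z w]. *)
Definition cosh_gap (d : R) : R := exp d + exp (- d) - 2.

Definition qdist (z w : pt) : R :=
  let '(x, y) := z in let '(u, v) := w in ((x - u)^2 + (y - v)^2) / (y * v).

Lemma cosh_gap_sq d : cosh_gap (2 * d) = (exp d - exp (- d))^2.
Proof.
  unfold cosh_gap; replace (2 * d) with (d + d) by ring.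
  rewrite Ropp_plus_distr, !exp_plus, !exp_Ropp.
  pose proof (exp_pos d); field; lra.
Qed.

Lemma cosh_gap_ge0 d : 0 <= cosh_gap d.
Proof. replace d with (2 * (d / 2)) by field; rewrite cosh_gap_sq; apply pow2_ge_0. Qed.

Lemma cosh_gap_double d : cosh_gap (2 * d) = 4 * cosh_gap d + cosh_gap d ^ 2.
Proof.
  rewrite cosh_gap_sq; unfold cosh_gap; rewrite !exp_Ropp.
  pose proof (exp_pos d); field; lra.
Qed.

Lemma cosh_gap_opp d : cosh_gap (- d) = cosh_gap d.
Proof. unfold cosh_gap; rewrite Ropp_involutive; ring. Qed.

Lemma cosh_gap_abs d : cosh_gap (Rabs d) = cosh_gap d.
Proof. unfold Rabs; destruct (Rcase_abs d); auto using cosh_gap_opp. Qed.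

Lemma cosh_gap_sub a b : cosh_gap (a - b) = exp a / exp b + exp b / exp a - 2.
Proof.
  unfold cosh_gap, Rdiv, Rminus; rewrite Ropp_plus_distr, Ropp_involutive, !exp_plus, !exp_Ropp.
  ring.
Qed.

Lemma cosh_gap_increasing a b : 0 <= a -> a < b -> cosh_gap a < cosh_gap b.
Proof.
  intros Ha Hab; unfold cosh_gap; rewrite !exp_Ropp.
  pose proof (exp_pos a) as ea.
  assert (eb : exp a < exp b) by (apply exp_increasing; lra).
  assert (eab : 1 < exp a * exp b) by (rewrite <- exp_plus, <- exp_0; apply exp_increasing; lra).
  apply Rlt_0_minus.
  replace (exp b + / exp b - 2 - (exp a + / exp a - 2))
    with ((exp b - exp a) * (exp a * exp b - 1) / (exp a * exp b)) by (field; lra).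
  apply Rdiv_lt_0_compat; nra.
Qed.

Lemma cosh_gap_le_inv a b : 0 <= b -> cosh_gap a <= cosh_gap b -> a <= b.
Proof.
  intros Hb H; destruct (Rle_lt_dec a b); auto.
  pose proof (cosh_gap_increasing b a Hb r); lra.
Qed.

Lemma cosh_gap_lt_inv a b : 0 <= b -> cosh_gap a < cosh_gap b -> a < b.
Proof.
  intros Hb H; destruct (Rtotal_order a b) as [|[Hab|Hba]]; auto.
  - subst; lra.
  - pose proof (cosh_gap_increasing b a Hb Hba); lra.
Qed.

Lemma sqrt_sum_ratio_ge1 A P : 0 <= A -> 0 < P ->
  let W := (sqrt A + sqrt (A + 4 * P)) / (2 * sqrt P) in
  1 <= W /\ W * W + / (W * W) - 2 = A / P.
Proof.
  intros HA HP W.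
  assert (Ha := sqrt_sqrt A HA).
  assert (Hb := sqrt_sqrt (A + 4 * P) ltac:(lra)).
  assert (Hw := sqrt_sqrt P ltac:(lra)).
  assert (a0 := sqrt_pos A).
  assert (b0 := sqrt_pos (A + 4 * P)).
  assert (w0 : 0 < sqrt P) by (apply sqrt_lt_R0; lra).
  unfold W; revert Ha Hb Hw a0 b0 w0.
  generalize (sqrt A) (sqrt (A + 4 * P)) (sqrt P); intros a b w Ha Hb Hw a0 b0 w0.
  assert (bw : 2 * w <= b) by nra.
  split.
  - apply (Rmult_le_reg_r (2 * w)); [lra|].
    unfold Rdiv; rewrite Rmult_assoc, Rinv_l; lra.
  - assert (W0 : 0 < (a + b) / (2 * w)) by (apply Rdiv_lt_0_compat; lra).
    (* [W - 1/W = a / w] because [b^2 = a^2 + 4 w^2] *)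
    assert (E : (a + b) / (2 * w) - / ((a + b) / (2 * w)) = a / w).
    { assert (R : (a + b)^2 - 4 * w^2 = 2 * a * (a + b)) by nra.
      transitivity (((a + b)^2 - 4 * w^2) / (2 * w * (a + b))); [field; lra|].
      rewrite R; field; lra. }
    replace (A / P) with ((a / w)^2) by (rewrite <- Ha, <- Hw; field; lra).
    rewrite <- E; field; lra.
Qed.

Lemma hdist_log_ratio z w : inH z -> inH w ->
  exists W, 1 <= W /\ hdist z w = 2 * ln W /\ W * W + / (W * W) - 2 = qdist z w.
Proof.
  destruct z as [x y], w as [u v]; cbv beta iota zeta delta [inH hdist qdist fst snd].
  intros Hy Hv.
  replace ((x - u)^2 + (y + v)^2) with (((x - u)^2 + (y - v)^2) + 4 * (y * v)) by ring.
  assert (HA : 0 <= (x - u)^2 + (y - v)^2)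
    by (pose proof (pow2_ge_0 (x - u)); pose proof (pow2_ge_0 (y - v)); lra).
  destruct (sqrt_sum_ratio_ge1 _ (y * v) HA ltac:(nra)) as [H1 H2].
  eexists; split; [exact H1|]; split; [reflexivity|exact H2].
Qed.

Lemma hdist_ge0 z w : inH z -> inH w -> 0 <= hdist z w.
Proof.
  intros Hz Hw; destruct (hdist_log_ratio z w Hz Hw) as [W [W1 [-> _]]].
  enough (0 <= ln W) by lra.
  rewrite <- ln_1; destruct W1 as [W1|<-]; [left; apply ln_increasing|]; lra.
Qed.

Lemma cosh_gap_hdist z w : inH z -> inH w -> cosh_gap (hdist z w) = qdist z w.
Proof.
  intros Hz Hw; destruct (hdist_log_ratio z w Hz Hw) as [W [W1 [-> <-]]].
  unfold cosh_gap; rewrite exp_Ropp.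
  replace (2 * ln W) with (ln W + ln W) by ring.
  rewrite exp_plus, exp_ln by lra; reflexivity.
Qed.

Lemma hdist_eq_qdist z w d : inH z -> inH w -> 0 <= d ->
  qdist z w = cosh_gap d -> hdist z w = d.
Proof.
  intros Hz Hw Hd E; rewrite <- cosh_gap_hdist in E by auto.
  pose proof (hdist_ge0 z w Hz Hw).
  apply Rle_antisym; apply cosh_gap_le_inv; lra.
Qed.

Lemma hdist_lt_qdist z w d : inH z -> inH w -> 0 <= d ->
  (hdist z w < d <-> qdist z w < cosh_gap d).
Proof.
  intros Hz Hw Hd; rewrite <- cosh_gap_hdist by auto; split.
  - apply cosh_gap_increasing, hdist_ge0; auto.
  - apply cosh_gap_lt_inv; auto.
Qed.

Lemma hdist_ge_qdist z w d : inH z -> inH w -> 0 <= d ->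
  (d <= hdist z w <-> cosh_gap d <= qdist z w).
Proof.
  intros Hz Hw Hd; rewrite <- cosh_gap_hdist by auto; split.
  - intros [H|<-]; [left; apply cosh_gap_increasing|]; lra.
  - apply cosh_gap_le_inv, hdist_ge0; auto.
Qed.

Lemma hdist_sym z w : inH z -> inH w -> hdist z w = hdist w z.
Proof.
  intros Hz Hw; apply hdist_eq_qdist; auto using hdist_ge0.
  rewrite cosh_gap_hdist by auto.
  destruct z as [x y], w as [u v]; unfold qdist; f_equal; ring.
Qed.

Lemma hdist_xx z : inH z -> hdist z z = 0.
Proof.
  intros Hz; apply hdist_eq_qdist; auto; [lra|].
  unfold cosh_gap; rewrite Ropp_0, exp_0.
  destruct z as [x y]; unfold qdist, inH in *; simpl in *; field; lra.
Qed.

Definition denom (h : mat) (z : pt) : R :=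
  (mc h * fst z + md h)^2 + (mc h * snd z)^2.

Lemma act_pair h x y : act h (x, y) =
  ((ma h * mc h * (x^2 + y^2) + (ma h * md h + mb h * mc h) * x + mb h * md h) / denom h (x, y),
   det h * y / denom h (x, y)).
Proof. reflexivity. Qed.

Lemma denom_gt0 h z : det h = 1 -> inH z -> 0 < denom h z.
Proof.
  destruct h as [a b c d], z as [x y]; unfold det, denom, inH; cbn; intros H Hy.
  pose proof (pow2_ge_0 (c * x + d)).
  destruct (Req_dec c 0) as [->|Hc].
  - assert (Hd : d <> 0) by (intro; subst; lra).
    pose proof (Rsqr_pos_lt d Hd); unfold Rsqr in *; nra.
  - pose proof (Rsqr_pos_lt c Hc); unfold Rsqr in *.
    assert (0 < c * c * (y * y)) by (apply Rmult_lt_0_compat; nra). nra.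
Qed.

Lemma act_inH h z : det h = 1 -> inH z -> inH (act h z).
Proof.
  intros Hh Hz; pose proof (denom_gt0 h z Hh Hz).
  destruct z as [x y]; unfold inH in *; rewrite act_pair, Hh; simpl in *.
  apply Rdiv_lt_0_compat; lra.
Qed.

Lemma act_mmul g h z : det g = 1 -> det h = 1 -> inH z ->
  act (mmul g h) z = act g (act h z).
Proof.
  intros Hg Hh Hz.
  pose proof (denom_gt0 h z Hh Hz) as Nh.
  assert (Ngh : 0 < denom (mmul g h) z)
    by (apply denom_gt0; auto; destruct g, h; unfold det, mmul in *; simpl in *; nra).
  destruct z as [x y]; rewrite !act_pair.
  destruct g as [a b c d], h as [a' b' c' d']; unfold denom, det in *; simpl in *.
  (* the denominator of the composite is [|c' z + d'|^2 |(c a' + d c') z + (c b' + d d')|^2] *)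
  assert (E : (c * (a' * c' * (x * x + y * y) + (a' * d' + b' * c') * x + b' * d')
               + d * ((c' * x + d') * (c' * x + d') + c' * y * (c' * y)))^2
              + (c * ((a' * d' - b' * c') * y))^2
            = ((c' * x + d')^2 + (c' * y)^2)
              * (((c * a' + d * c') * x + (c * b' + d * d'))^2 + ((c * a' + d * c') * y)^2))
    by ring.
  assert (P : 0 < ((c' * x + d')^2 + (c' * y)^2)
              * (((c * a' + d * c') * x + (c * b' + d * d'))^2 + ((c * a' + d * c') * y)^2))
    by (apply Rmult_lt_0_compat; assumption).
  f_equal; field; split; nra.
Qed.

Lemma qdist_act h z w : det h = 1 -> inH z -> inH w -> qdist (act h z) (act h w) = qdist z w.
Proof.
  intros Hh Hz Hw.
  pose proof (denom_gt0 h z Hh Hz); pose proof (denom_gt0 h w Hh Hw).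
  destruct z as [x y], w as [u v]; rewrite !act_pair.
  destruct h as [a b c d]; unfold denom, det, inH in *; simpl in *.
  field; repeat split; lra.
Qed.

Lemma hdist_act h z w : det h = 1 -> inH z -> inH w -> hdist (act h z) (act h w) = hdist z w.
Proof.
  intros Hh Hz Hw; apply hdist_eq_qdist; auto using act_inH, hdist_ge0.
  rewrite qdist_act, cosh_gap_hdist; auto.
Qed.

Lemma det_mmul g h : det (mmul g h) = det g * det h.
Proof. destruct g, h; unfold det, mmul; simpl; ring. Qed.

Lemma det_minv h : det (minv h) = det h.
Proof. destruct h; unfold det, minv; simpl; ring. Qed.

Lemma mmul_minv_l h : det h = 1 -> mmul (minv h) h = mid.
Proof. destruct h; unfold det, mmul, minv, mid; simpl; intros; f_equal; lra. Qed.

Lemma mmul_minv_r h : det h = 1 -> mmul h (minv h) = mid.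
Proof. destruct h; unfold det, mmul, minv, mid; simpl; intros; f_equal; lra. Qed.

Lemma act_mid z : act mid z = z.
Proof. destruct z; unfold act, mid; simpl; f_equal; field. Qed.

Lemma act_mneg_id z : act mneg_id z = z.
Proof. destruct z; unfold act, mneg_id; simpl; f_equal; field. Qed.

Lemma act_minvK h z : det h = 1 -> inH z -> act (minv h) (act h z) = z.
Proof.
  intros Hh Hz; rewrite <- act_mmul, mmul_minv_l; auto using act_mid.
  rewrite det_minv; auto.
Qed.

Lemma act_minvKV h z : det h = 1 -> inH z -> act h (act (minv h) z) = z.
Proof.
  intros Hh Hz; rewrite <- act_mmul, mmul_minv_r; auto using act_mid.
  rewrite det_minv; auto.
Qed.

Definition axis (t : R) : pt := (0, exp t).

Lemma axis_inH t : inH (axis t).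
Proof. apply exp_pos. Qed.

Lemma axis0 : axis 0 = (0, 1).
Proof. unfold axis; rewrite exp_0; reflexivity. Qed.

Lemma qdist_axis s t : qdist (axis s) (axis t) = cosh_gap (s - t).
Proof.
  rewrite cosh_gap_sub; unfold qdist, axis.
  pose proof (exp_pos s); pose proof (exp_pos t); field; lra.
Qed.

Lemma hdist_axis s t : hdist (axis s) (axis t) = Rabs (s - t).
Proof.
  apply hdist_eq_qdist; auto using axis_inH, Rabs_pos.
  rewrite cosh_gap_abs; apply qdist_axis.
Qed.

(* Elliptic element fixing [i]; for [C = cos phi], [S = sin phi] it rotates by the angle [2 phi]. *)
Definition rot (C S : R) : mat := Mat C S (- S) C.

Lemma det_rot C S : C^2 + S^2 = 1 -> det (rot C S) = 1.
Proof. unfold det, rot; simpl; lra. Qed.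

Lemma minv_rot C S : minv (rot C S) = rot C (- S).
Proof. unfold minv, rot; simpl; f_equal; ring. Qed.

Lemma act_rot_i C S : C^2 + S^2 = 1 -> act (rot C S) (0, 1) = (0, 1).
Proof. intros H; rewrite act_pair; unfold denom, det, rot; simpl in *; f_equal; field; lra. Qed.

Lemma rot_onto_axis x y : 0 < y -> exists C S, C^2 + S^2 = 1 /\ fst (act (rot C S) (x, y)) = 0.
Proof.
  intros Hy.
  (* with [t = S / C] the real part vanishes iff [x t^2 + (x^2 + y^2 - 1) t - x = 0] *)
  set (B := x^2 + y^2 - 1).
  set (D := sqrt (B^2 + 4 * x^2)).
  assert (HD : D * D = B^2 + 4 * x^2)
    by (apply sqrt_sqrt; pose proof (pow2_ge_0 B); pose proof (pow2_ge_0 x); lra).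
  assert (Ht : exists t, x * t^2 + B * t - x = 0).
  { destruct (Req_dec x 0) as [->|Hx]; [exists 0; ring|].
    exists ((- B + D) / (2 * x)).
    transitivity ((D * D - B^2 - 4 * x^2) / (4 * x)); [field; auto|].
    rewrite HD; field; auto. }
  destruct Ht as [t Ht].
  set (w := sqrt (1 + t^2)).
  assert (Hw : w * w = 1 + t^2) by (apply sqrt_sqrt; pose proof (pow2_ge_0 t); lra).
  assert (w0 : 0 < w) by (apply sqrt_lt_R0; pose proof (pow2_ge_0 t); lra).
  assert (HCS : (1 / w)^2 + (t / w)^2 = 1)
    by (transitivity ((1 + t^2) / (w * w)); [field; lra | rewrite <- Hw; field; lra]).
  exists (1 / w), (t / w); split; [exact HCS|].
  rewrite act_pair; unfold rot; simpl.
  replace (1 / w * - (t / w) * (x * (x * 1) + y * (y * 1)) + (1 / w * (1 / w) + t / w * - (t / w)) * x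
           + t / w * (1 / w)) with (- (x * t^2 + B * t - x) / (w * w)) by (unfold B; field; lra).
  rewrite Ht; unfold Rdiv; ring.
Qed.

(* [z |-> (z - x) / y], which sends [(x, y)] to [i]. *)
Definition recentre (x y : R) : mat := Mat (1 / sqrt y) (- x / sqrt y) 0 (sqrt y).

Lemma det_recentre x y : 0 < y -> det (recentre x y) = 1.
Proof.
  intros Hy; pose proof (sqrt_lt_R0 y Hy).
  unfold det, recentre; simpl; field; lra.
Qed.

Lemma act_recentre x y u v : 0 < y -> act (recentre x y) (u, v) = ((u - x) / y, v / y).
Proof.
  intros Hy; pose proof (sqrt_lt_R0 y Hy); pose proof (sqrt_sqrt y ltac:(lra)).
  rewrite act_pair; unfold denom, det, recentre; simpl.
  replace ((0 * u + sqrt y) * ((0 * u + sqrt y) * 1) + 0 * v * (0 * v * 1)) with y by nra.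
  f_equal; field; lra.
Qed.

Lemma normalize_pair m z : inH m -> inH z ->
  exists N, det N = 1 /\ act N m = (0, 1) /\ fst (act N z) = 0.
Proof.
  destruct m as [x y], z as [u v]; intros Hy Hv; unfold inH in Hy, Hv; simpl in Hy, Hv.
  assert (Hv' : 0 < v / y) by (apply Rdiv_lt_0_compat; auto).
  destruct (rot_onto_axis ((u - x) / y) (v / y) Hv') as [C [S [HCS HR]]].
  exists (mmul (rot C S) (recentre x y)).
  assert (Hr := det_rot C S HCS); assert (Hm := det_recentre x y Hy).
  split; [rewrite det_mmul, Hr, Hm; ring|].
  rewrite !act_mmul, !act_recentre by (auto; unfold inH; simpl; lra).
  split; [|exact HR].
  replace ((x - x) / y) with 0 by (field; lra); replace (y / y) with 1 by (field; lra).
  apply act_rot_i; auto.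
Qed.

Lemma exp_Rabs l : exp l = exp (Rabs l) \/ exp l = / exp (Rabs l).
Proof.
  unfold Rabs; destruct (Rcase_abs l); [right; rewrite exp_Ropp, Rinv_inv|left]; reflexivity.
Qed.

Lemma exp_ge1 r : 0 <= r -> 1 <= exp r.
Proof. intros [H|<-]; rewrite <- exp_0; [left; apply exp_increasing|]; lra. Qed.

(* [rho = exp (hdist i (u, v))] by the constraint, [sig = exp |l|] and [Y = exp l]: the triangle
   inequality [hdist (i Y) (u, v) <= |l| + hdist i (u, v)] in [cosh_gap] form. *)
Lemma cosh_gap_triangle_at_i rho sig Y u v : 1 <= rho -> 1 <= sig -> 0 < v -> (Y = sig \/ Y = / sig) ->
  u^2 + v^2 + 1 = v * (rho + / rho) ->
  (u^2 + (Y - v)^2) / (Y * v) <= sig * rho + / (sig * rho) - 2.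
Proof.
  intros rho1 sig1 Hv HY E.
  assert (Hb : (v - rho) * (v - / rho) <= 0).
  { replace ((v - rho) * (v - / rho)) with (v^2 + 1 - v * (rho + / rho)) by (field; lra).
    pose proof (pow2_ge_0 u); lra. }
  assert (irho : / rho <= 1) by (rewrite <- Rinv_1; apply Rinv_le_contravar; lra).
  assert (isig : / sig <= 1) by (rewrite <- Rinv_1; apply Rinv_le_contravar; lra).
  assert (vlo : / rho <= v) by nra.
  assert (vhi : v <= rho) by nra.
  assert (ps : 0 <= sig - / sig) by lra.
  assert (vr : 1 <= rho * v)
    by (rewrite <- (Rinv_r rho) by lra; apply Rmult_le_compat_l; lra).
  assert (vr' : v * / rho <= 1)
    by (rewrite <- (Rinv_r rho) by lra; apply Rmult_le_compat_r; [left; apply Rinv_0_lt_compat|]; lra).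
  replace (u^2) with (v * (rho + / rho) - v^2 - 1) by lra.
  destruct HY as [HY|HY]; subst Y.
  - replace (sig * rho + / (sig * rho) - 2) with
      ((v * (rho + / rho) - v ^ 2 - 1 + (sig - v) ^ 2) / (sig * v)
       + (sig - / sig) * (rho * v - 1) / v) by (field; lra).
    enough (0 <= (sig - / sig) * (rho * v - 1) / v) by lra.
    apply Rle_mult_inv_pos; [apply Rmult_le_pos|]; lra.
  - replace (sig * rho + / (sig * rho) - 2) with
      ((v * (rho + / rho) - v ^ 2 - 1 + (/ sig - v) ^ 2) / (/ sig * v)
       + (sig - / sig) * (1 - v * / rho) / v) by (field; lra).
    enough (0 <= (sig - / sig) * (1 - v * / rho) / v) by lra.
    apply Rle_mult_inv_pos; [apply Rmult_le_pos|]; lra.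
Qed.

Lemma hdist_axis_triangle l u v : 0 < v ->
  hdist (axis l) (u, v) <= Rabs l + hdist (axis 0) (u, v).
Proof.
  intros Hv; assert (Hw : inH (u, v)) by exact Hv.
  pose proof (cosh_gap_hdist _ _ (axis_inH 0) Hw) as Hr.
  pose proof (hdist_ge0 _ _ (axis_inH 0) Hw) as r0.
  pose proof (Rabs_pos l) as s0.
  apply cosh_gap_le_inv; [lra|]; rewrite cosh_gap_hdist by auto using axis_inH.
  revert Hr r0; generalize (hdist (axis 0) (u, v)); intros r Hr r0.
  unfold cosh_gap, qdist, axis in *; rewrite exp_0, exp_Ropp in Hr.
  rewrite exp_Ropp, exp_plus.
  apply cosh_gap_triangle_at_i; auto using exp_ge1, exp_Rabs.
  apply (Rmult_eq_reg_r (/ v)); [|apply Rinv_neq_0_compat; lra].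
  transitivity (((0 - u) ^ 2 + (1 - v) ^ 2) / (1 * v) + 2); [field; lra|].
  rewrite <- Hr; pose proof (exp_pos r); field; lra.
Qed.

Lemma hdist_triangle z m w : inH z -> inH m -> inH w -> hdist z w <= hdist z m + hdist m w.
Proof.
  intros Hz Hm Hw; destruct (normalize_pair m z Hm Hz) as [N [HN [Nm Nz]]].
  rewrite <- (hdist_act N z w), <- (hdist_act N z m), <- (hdist_act N m w) by auto.
  rewrite Nm.
  assert (Hz' := act_inH N z HN Hz); assert (Hw' := act_inH N w HN Hw).
  destruct (act N z) as [x0 Y]; simpl in Nz; subst x0.
  destruct (act N w) as [u v]; unfold inH in Hz', Hw'; simpl in Hz', Hw'.
  replace (0, Y) with (axis (ln Y)) by (unfold axis; rewrite exp_ln; auto).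
  rewrite <- axis0, hdist_axis, Rminus_0_r.
  apply hdist_axis_triangle; auto.
Qed.

Definition isom_line (c : R -> pt) : Prop :=
  (forall t, inH (c t)) /\ (forall s t, hdist (c s) (c t) = Rabs (s - t)).

Lemma qdist_isom_line c s t : isom_line c -> qdist (c s) (c t) = cosh_gap (s - t).
Proof. intros [Hin Hd]; rewrite <- cosh_gap_hdist, Hd by auto; apply cosh_gap_abs. Qed.

Lemma isom_line_act h c : det h = 1 -> isom_line c -> isom_line (fun t => act h (c t)).
Proof. intros Hh [Hin Hd]; split; intros; [apply act_inH | rewrite hdist_act]; auto. Qed.

Lemma eq_axis_of_qdist q t : inH q ->
  qdist (axis 0) q = cosh_gap (0 - t) -> qdist (axis 1) q = cosh_gap (1 - t) -> q = axis t.
Proof.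
  destruct q as [x y]; rewrite !cosh_gap_sub, exp_0; cbv beta iota delta [qdist inH axis fst snd].
  rewrite exp_0; intros Hy E0 E1.
  pose proof (exp_pos t) as T0.
  assert (e1 : 1 < exp 1) by (rewrite <- exp_0 at 1; apply exp_increasing; lra).
  revert E0 E1 T0 e1; generalize (exp 1) (exp t); intros e T E0 E1 T0 e1.
  assert (F0 : x^2 + y^2 + 1 = y * (T + / T)).
  { apply (Rmult_eq_reg_r (/ y)); [|apply Rinv_neq_0_compat; lra].
    transitivity (((0 - x) ^ 2 + (1 - y) ^ 2) / (1 * y) + 2); [field; lra|].
    rewrite E0; field; lra. }
  assert (F1 : x^2 + y^2 + e^2 = y * (T + e^2 / T)).
  { apply (Rmult_eq_reg_r (/ (e * y))); [|apply Rinv_neq_0_compat; nra].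
    transitivity (((0 - x) ^ 2 + (e - y) ^ 2) / (e * y) + 2); [field; lra|].
    rewrite E1; field; lra. }
  assert (Hy' : y = T).
  { assert (G : (e^2 - 1) * (T - y) = 0).
    { apply (Rmult_eq_reg_r (/ T)); [|apply Rinv_neq_0_compat; lra].
      replace ((e^2 - 1) * (T - y) * / T) with ((x^2 + y^2 + e^2 - y * (T + e^2 / T))
        - (x^2 + y^2 + 1 - y * (T + / T))) by (field; lra).
      rewrite F0, F1; ring. }
    destruct (Rmult_integral _ _ G); nra. }
  subst y; assert (x^2 = 0) by (assert (T * (T + / T) = T^2 + 1) by (field; lra); lra).
  f_equal; nra.
Qed.

Lemma isom_line_on_axis c : isom_line c -> c 0 = axis 0 -> c 1 = axis 1 ->
  forall t, c t = axis t.
Proof.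
  intros Hc H0 H1 t; apply eq_axis_of_qdist; [apply Hc| |];
    [rewrite <- H0 | rewrite <- H1]; apply qdist_isom_line; auto.
Qed.

Lemma act_inversion_axis Y : 0 < Y -> act (rot 0 1) (0, Y) = (0, / Y).
Proof. intros; rewrite act_pair; unfold denom, det, rot; simpl; f_equal; field; lra. Qed.

Lemma rot_onto_upper_axis x y : 0 < y ->
  exists C S Y, C^2 + S^2 = 1 /\ 1 <= Y /\ act (rot C S) (x, y) = (0, Y).
Proof.
  intros Hy; destruct (rot_onto_axis x y Hy) as [C [S [HCS H0]]].
  assert (Hin := act_inH _ (x, y) (det_rot C S HCS) Hy).
  destruct (act (rot C S) (x, y)) as [x0 Y] eqn:E; simpl in H0; subst x0.
  unfold inH in Hin; simpl in Hin.
  destruct (Rle_lt_dec 1 Y) as [HY|HY]; [exists C, S, Y; auto|].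
  (* otherwise follow with the half turn [z |-> -1/z], which sends [i Y] to [i / Y] *)
  exists (- S), C, (/ Y); split; [lra|split].
  - rewrite <- Rinv_1; apply Rinv_le_contravar; lra.
  - replace (rot (- S) C) with (mmul (rot 0 1) (rot C S)) by (unfold mmul, rot; simpl; f_equal; ring).
    rewrite act_mmul, E, act_inversion_axis; auto using det_rot.
    apply det_rot; lra.
Qed.

Lemma isom_line_rot_axis c : isom_line c -> c 0 = axis 0 ->
  exists C S, C^2 + S^2 = 1 /\ forall t, c t = act (rot C S) (axis t).
Proof.
  intros Hc H0.
  destruct (c 1) as [x y] eqn:E1; pose proof (proj1 Hc 1) as Hy; rewrite E1 in Hy.
  destruct (rot_onto_upper_axis x y Hy) as [C [S [Y [HCS [HY HR]]]]].
  set (c' := fun t => act (rot C S) (c t)).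
  assert (Hc' : isom_line c') by (apply isom_line_act; auto using det_rot).
  assert (c'0 : c' 0 = axis 0) by (unfold c'; rewrite H0, axis0; apply act_rot_i; auto).
  assert (c'1 : c' 1 = axis (ln Y)) by (unfold c', axis; rewrite E1, exp_ln; auto; lra).
  (* [c' 1] lies on the upper half of the axis at distance 1 from [i], hence [Y = e] *)
  assert (lnY : ln Y = 1).
  { pose proof (proj2 Hc' 1 0) as d1; rewrite c'0, c'1, hdist_axis, !Rminus_0_r, Rabs_R1 in d1.
    rewrite Rabs_right in d1; auto.
    rewrite <- ln_1; apply Rle_ge; destruct HY as [HY|<-]; [left; apply ln_increasing|]; lra. }
  rewrite lnY in c'1.
  exists C, (- S); split; [lra|]; intro t.
  rewrite <- (isom_line_on_axis c' Hc' c'0 c'1 t); unfold c'.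
  rewrite <- minv_rot, act_minvK; auto using det_rot; apply Hc.
Qed.

Lemma isom_line_frame c : isom_line c -> exists N, det N = 1 /\ forall t, act N (c t) = axis t.
Proof.
  intros Hc; destruct (c 0) as [x0 y0] eqn:E0; pose proof (proj1 Hc 0) as H0; rewrite E0 in H0.
  set (c1 := fun t => act (recentre x0 y0) (c t)).
  assert (Hc1 : isom_line c1) by (apply isom_line_act; auto using det_recentre).
  assert (c10 : c1 0 = axis 0)
    by (unfold c1; rewrite E0, act_recentre, axis0 by auto; f_equal; field; apply Rgt_not_eq, H0).
  destruct (isom_line_rot_axis c1 Hc1 c10) as [C [S [HCS Hcl]]].
  exists (mmul (minv (rot C S)) (recentre x0 y0)); split.
  - rewrite det_mmul, det_minv, det_rot, det_recentre; auto; ring.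
  - intro t; rewrite act_mmul; [| rewrite det_minv; apply det_rot | apply det_recentre | apply Hc]; auto.
    fold (c1 t); rewrite Hcl; apply act_minvK; auto using det_rot, axis_inH.
Qed.

Lemma axis_stable_coeffs X : det X = 1 -> (forall t, fst (act X (axis t)) = 0) ->
  ma X * mc X = 0 /\ mb X * md X = 0.
Proof.
  intros HX Hax.
  (* the real part of [X (i Y)] has numerator [a c Y^2 + b d]; take [Y = 1] and [Y = e] *)
  assert (num : forall t, ma X * mc X * exp t ^ 2 + mb X * md X = 0).
  { intro t; pose proof (denom_gt0 X _ HX (axis_inH t)) as Hn.
    specialize (Hax t); unfold axis in *; rewrite act_pair in Hax; simpl in Hax.
    destruct (Rmult_integral _ _ Hax) as [N0|N0]; [rewrite <- N0; ring|].
    exfalso; apply (Rinv_neq_0_compat _ (Rgt_not_eq _ _ Hn) N0). }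
  pose proof (num 0) as n0; pose proof (num 1) as n1; rewrite exp_0 in n0.
  assert (e1 : 1 < exp 1) by (rewrite <- exp_0 at 1; apply exp_increasing; lra).
  assert (Hac : ma X * mc X * (exp 1 ^ 2 - 1) = 0) by lra.
  destruct (Rmult_integral _ _ Hac) as [ac|]; [split; lra | nra].
Qed.

Lemma fixed_point_free_axis_scaling X : det X = 1 -> (forall t, fst (act X (axis t)) = 0) ->
  (forall z, inH z -> act X z <> z) ->
  exists mu, 0 < mu /\ forall x y, act X (x, y) = (mu * x, mu * y).
Proof.
  intros HX Hax Hfix; destruct (axis_stable_coeffs X HX Hax) as [ac bd].
  destruct X as [a b c d]; unfold det in HX; cbn [ma mb mc md] in *.
  destruct (Rmult_integral _ _ ac) as [Ha|Hc]; subst.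
  - (* [a = 0] forces [d = 0]: then [X] is an elliptic involution fixing [i / |c|] *)
    exfalso; assert (Hd : d = 0) by (destruct (Rmult_integral _ _ bd); subst; lra); subst d.
    assert (c0 : 0 < Rabs c) by (apply Rabs_pos_lt; intro; subst; lra).
    apply (Hfix (0, / Rabs c)); [apply Rinv_0_lt_compat, c0|].
    assert (cc : c * c = Rabs c * Rabs c) by (rewrite <- Rabs_mult, Rabs_right; nra).
    rewrite act_pair; unfold denom, det; simpl.
    replace (c * / Rabs c * (c * / Rabs c * 1)) with (c * c / (Rabs c * Rabs c)) by (field; lra).
    rewrite cc, HX; f_equal; field; lra.
  - assert (Hb : b = 0) by (destruct (Rmult_integral _ _ bd); subst; lra); subst b.
    assert (Hd : d <> 0) by (intro; subst; lra).
    exists (/ (d * d)); split; [apply Rinv_0_lt_compat; nra|].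
    assert (Ha : a = / d) by (apply (Rmult_eq_reg_r d); [rewrite Rinv_l|]; lra); subst a.
    intros x y; rewrite act_pair; unfold denom, det; simpl; f_equal; field; auto.
Qed.

Lemma hdist_scaling_ge mu x y : 0 < mu -> 0 < y -> Rabs (ln mu) <= hdist (x, y) (mu * x, mu * y).
Proof.
  intros Hm Hy.
  apply hdist_ge_qdist; [exact Hy | apply Rmult_lt_0_compat; auto | apply Rabs_pos |].
  rewrite cosh_gap_abs; unfold cosh_gap, qdist; rewrite exp_Ropp, exp_ln by auto.
  replace (((x - mu * x) ^ 2 + (y - mu * y) ^ 2) / (y * (mu * y)))
    with (mu + / mu - 2 + (1 - mu)^2 * x^2 / (mu * y^2)) by (field; lra).
  enough (0 <= (1 - mu)^2 * x^2 / (mu * y^2)) by lra.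
  apply Rle_mult_inv_pos; [apply Rmult_le_pos; apply pow2_ge_0 | apply Rmult_lt_0_compat; nra].
Qed.

Lemma axis_translation X L : det X = 1 ->
  (forall t, exists t', act X (axis t) = axis t') -> (forall z, inH z -> act X z <> z) ->
  transl_length X L ->
  (forall t, act X (axis t) = axis (t + L)) \/ (forall t, act X (axis t) = axis (t - L)).
Proof.
  intros HX Hpres Hfix [Hmin [z0 [Hz0 HL]]].
  assert (Hax : forall t, fst (act X (axis t)) = 0)
    by (intro t; destruct (Hpres t) as [t' ->]; reflexivity).
  destruct (fixed_point_free_axis_scaling X HX Hax Hfix) as [mu [Hmu Hsc]].
  assert (HXa : forall t, act X (axis t) = axis (t + ln mu)).
  { intro t; unfold axis; rewrite Hsc, exp_plus, exp_ln by auto; f_equal; ring. }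
  (* the displacement is [|ln mu|] along the axis and at least [|ln mu|] everywhere *)
  assert (B1 : L <= Rabs (ln mu)).
  { pose proof (Hmin _ (axis_inH 0)) as h; rewrite HXa, hdist_axis in h.
    rewrite Rplus_0_l, Rminus_0_l, Rabs_Ropp in h; exact h. }
  assert (B2 : Rabs (ln mu) <= L).
  { rewrite <- HL; destruct z0 as [x y]; rewrite Hsc; apply hdist_scaling_ge; auto. }
  unfold Rabs in B1, B2; destruct (Rcase_abs (ln mu)); [right|left]; intro t;
    rewrite HXa; f_equal; lra.
Qed.

Definition mconj (h g : mat) : mat := mmul h (mmul g (minv h)).

Lemma mmul_assoc f g h : mmul f (mmul g h) = mmul (mmul f g) h.
Proof. destruct f, g, h; unfold mmul; simpl; f_equal; ring. Qed.

Lemma mmul_mid_l h : mmul mid h = h.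
Proof. destruct h; unfold mmul, mid; simpl; f_equal; ring. Qed.

Lemma mmul_mid_r h : mmul h mid = h.
Proof. destruct h; unfold mmul, mid; simpl; f_equal; ring. Qed.

Lemma minvK h : minv (minv h) = h.
Proof. destruct h; unfold minv; simpl; f_equal; ring. Qed.

Lemma mconjK h g : det h = 1 -> mconj (minv h) (mconj h g) = g.
Proof.
  intros Hh; unfold mconj; rewrite minvK.
  rewrite !mmul_assoc, mmul_minv_l, mmul_mid_l, <- !mmul_assoc, mmul_minv_l, mmul_mid_r by auto.
  reflexivity.
Qed.

Lemma mconj_nontrivial h g : det h = 1 -> nontrivial g -> nontrivial (mconj h g).
Proof.
  intros Hh [g1 g2]; split; intro E; rewrite <- (mconjK h g Hh), E in g1, g2;
    unfold mconj in *; rewrite minvK in g1, g2.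
  - apply g1; rewrite mmul_mid_l, mmul_minv_l; auto.
  - apply g2; destruct h; unfold det, mmul, minv, mneg_id in *; simpl in *; f_equal; lra.
Qed.

Lemma det_mconj h g : det h = 1 -> det (mconj h g) = det g.
Proof. intros Hh; unfold mconj; rewrite !det_mmul, det_minv, Hh; ring. Qed.

Lemma act_mconj h g z : det h = 1 -> det g = 1 -> inH z ->
  act (mconj h g) z = act h (act g (act (minv h) z)).
Proof.
  intros Hh Hg Hz; assert (Hh' : det (minv h) = 1) by (rewrite det_minv; auto).
  unfold mconj; rewrite !act_mmul; auto using act_inH.
  rewrite det_mmul, Hg, Hh'; ring.
Qed.

Lemma transl_length_mconj h g L : det h = 1 -> det g = 1 ->
  transl_length g L -> transl_length (mconj h g) L.
Proof.
  intros Hh Hg [Hmin [z0 [Hz0 HL]]]; assert (Hh' : det (minv h) = 1) by (rewrite det_minv; auto).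
  split.
  - intros z Hz; rewrite act_mconj by auto.
    rewrite <- (act_minvKV h z) at 1 by auto.
    rewrite hdist_act by auto using act_inH; apply Hmin, act_inH; auto.
  - exists (act h z0); split; [apply act_inH; auto|].
    rewrite act_mconj, act_minvK, hdist_act; auto using act_inH.
Qed.

Lemma isom_line_translation c k L : isom_line c -> det k = 1 ->
  (forall t, exists t', act k (c t) = c t') -> (forall z, inH z -> act k z <> z) ->
  transl_length k L ->
  (forall t, act k (c t) = c (t + L)) \/ (forall t, act k (c t) = c (t - L)).
Proof.
  intros Hc Hk Hpres Hfix TL; pose proof (proj1 Hc) as Hcin.
  destruct (isom_line_frame c Hc) as [N [HN Nc]].
  assert (HNi : det (minv N) = 1) by (rewrite det_minv; auto).
  assert (cN : forall t, act (minv N) (axis t) = c t)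
    by (intro t; rewrite <- Nc; apply act_minvK; auto; apply Hc).
  assert (XNc : forall t, act (mconj N k) (axis t) = act N (act k (c t)))
    by (intro t; rewrite act_mconj, cN; auto using axis_inH).
  assert (Hax : forall t, exists t', act (mconj N k) (axis t) = axis t').
  { intro t; destruct (Hpres t) as [t' E]; exists t'; rewrite XNc, E; auto. }
  assert (Hfix' : forall z, inH z -> act (mconj N k) z <> z).
  { intros z Hz E; rewrite act_mconj in E by auto.
    apply (Hfix (act (minv N) z)); [apply act_inH; auto|].
    rewrite <- E at 2; rewrite act_minvK; auto using act_inH. }
  assert (dX : det (mconj N k) = 1) by (rewrite det_mconj; auto).
  destruct (axis_translation _ L dX Hax Hfix' (transl_length_mconj N k L HN Hk TL)) as [HX|HX];
    [left; intro t; rewrite <- (cN (t + L)) | right; intro t; rewrite <- (cN (t - L))];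
    rewrite <- HX, XNc, act_minvK; auto using act_inH.
Qed.

Lemma projects_to_translation Gamma g L G c :
  closed_surface_group Gamma -> Gamma g -> nontrivial g -> transl_length g L ->
  projects_to Gamma g G -> isom_line c -> (forall z, G z <-> exists t, z = c t) ->
  exists e, Gamma e /\ det e = 1 /\ forall t, act e (c t) = c (t + L).
Proof.
  intros [Hdet [_ [Hmul [Hinv [_ [Hfree _]]]]]] Hg ntg TL [_ [h [Gh Hinvar]]] Hc HG.
  fold (mconj h g) in Hinvar.
  assert (Gk : Gamma (mconj h g)) by (unfold mconj; auto).
  assert (dk : det (mconj h g) = 1) by (rewrite det_mconj; auto).
  assert (Hpres : forall t, exists t', act (mconj h g) (c t) = c t').
  { intro t; apply HG, (Hinvar (c t)); [apply Hc | apply HG; eauto]. }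
  destruct (isom_line_translation c _ L Hc dk Hpres
              (Hfree _ Gk (mconj_nontrivial h g (Hdet h Gh) ntg))
              (transl_length_mconj h g L (Hdet h Gh) (Hdet g Hg) TL)) as [Hk|Hk].
  - exists (mconj h g); auto.
  - exists (minv (mconj h g)); split; [auto|split; [rewrite det_minv; auto|]].
    intro t; rewrite <- (act_minvK (mconj h g) (c (t + L))), Hk by (auto; apply Hc).
    f_equal; f_equal; ring.
Qed.

Definition rot_axis (C S s : R) : pt := act (rot C S) (axis s).

Lemma rot_axis_inH C S s : C^2 + S^2 = 1 -> inH (rot_axis C S s).
Proof. intros; apply act_inH; auto using det_rot, axis_inH. Qed.

Lemma rot_axis_denom_gt0 C S s : C^2 + S^2 = 1 -> 0 < C^2 + S^2 * exp s ^ 2.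
Proof.
  intros H; pose proof (exp_pos s).
  assert (0 < exp s ^ 2) by (apply pow_lt; auto).
  destruct (Req_dec S 0) as [->|HS]; [nra|].
  pose proof (pow_lt _ 2 (Rsqr_pos_lt S HS)); unfold Rsqr in *; nra.
Qed.

Lemma rot_axis_coord C S s : C^2 + S^2 = 1 ->
  rot_axis C S s = (S * C * (1 - exp s ^ 2) / (C^2 + S^2 * exp s ^ 2),
                    exp s / (C^2 + S^2 * exp s ^ 2)).
Proof.
  intros H; pose proof (rot_axis_denom_gt0 C S s H).
  unfold rot_axis, axis; rewrite act_pair; unfold denom, det, rot; simpl in *.
  f_equal; [|replace (C * C - S * - S) with 1 by lra]; field; lra.
Qed.

Lemma qdist_axis_rot_axis C S t s : C^2 + S^2 = 1 ->
  qdist (axis t) (rot_axis C S s) =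
  (S^2 * C^2 * (1 - exp s ^ 2)^2 + (exp t * (C^2 + S^2 * exp s ^ 2) - exp s)^2)
  / (exp t * exp s * (C^2 + S^2 * exp s ^ 2)).
Proof.
  intros H; pose proof (rot_axis_denom_gt0 C S s H).
  pose proof (exp_pos s); pose proof (exp_pos t).
  rewrite rot_axis_coord by auto; unfold qdist, axis; field; lra.
Qed.

(* As [4 q + q^2 = cosh_gap (2 d) = 4 sinh^2 d] for [q = cosh_gap d], this is
   [sinh d >= |sin (2 phi)| sinh |t|]: the line crossing the axis at [i] at angle [2 phi] is at
   distance at least [d] from [axis t]. *)
Lemma qdist_axis_rot_axis_ge C S t s : C^2 + S^2 = 1 ->
  4 * S^2 * C^2 * cosh_gap (2 * t) <=
  4 * qdist (axis t) (rot_axis C S s) + qdist (axis t) (rot_axis C S s) ^ 2.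
Proof.
  intros H; pose proof (rot_axis_denom_gt0 C S s H) as n0.
  rewrite qdist_axis_rot_axis, cosh_gap_sq, exp_Ropp by auto.
  pose proof (exp_pos t) as T0; pose proof (exp_pos s) as Y0.
  replace (C^2) with (1 - S^2) in * by lra.
  revert n0 T0 Y0; generalize (exp t) (exp s) (S^2); intros T Y p n0 T0 Y0.
  match goal with |- _ <= ?rhs =>
    replace rhs with (4 * p * (1 - p) * (T - / T) ^ 2 +
      (((T + / T) * (Y - / Y) - (T - / T) * (Y + / Y) * (1 - 2 * p)) / 2) ^ 2)
      by (field; repeat split; lra) end.
  pose proof (pow2_ge_0 (((T + / T) * (Y - / Y) - (T - / T) * (Y + / Y) * (1 - 2 * p)) / 2)).
  lra.
Qed.

(* [sinh (d / 2) = |sin phi| sinh l] in the isosceles triangle with apex [i] and legs [l]. *)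
Lemma qdist_axis_rot_axis_diag C S l : C^2 + S^2 = 1 ->
  qdist (axis l) (rot_axis C S l) = S^2 * cosh_gap (2 * l).
Proof.
  intros H; pose proof (rot_axis_denom_gt0 C S l H) as n0.
  rewrite qdist_axis_rot_axis, cosh_gap_sq, exp_Ropp by auto.
  pose proof (exp_pos l) as T0.
  replace (C^2) with (1 - S^2) in * by lra.
  field; lra.
Qed.

Lemma cosh_gap_le_abs a b : 0 <= a -> a <= Rabs b -> cosh_gap a <= cosh_gap b.
Proof.
  intros Ha Hab; rewrite <- (cosh_gap_abs b).
  destruct Hab as [Hab|<-]; [left; apply cosh_gap_increasing|]; lra.
Qed.

(* Combines the two previous estimates; [C^2 >= 1/4] gives [|sin (2 phi)| >= |sin phi|]. *)
Lemma rot_axis_diag_close C S l eps t s : C^2 + S^2 = 1 -> 1/4 <= C^2 -> 0 <= l -> 0 <= eps ->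
  l <= Rabs t -> hdist (axis t) (rot_axis C S s) < 2 * eps ->
  hdist (axis l) (rot_axis C S l) < 4 * eps.
Proof.
  intros HCS HC Hl He Ht Hd.
  assert (Hin := rot_axis_inH C S s HCS); assert (Hin' := rot_axis_inH C S l HCS).
  apply hdist_lt_qdist in Hd; auto using axis_inH; [|lra].
  apply hdist_lt_qdist; auto using axis_inH; [lra|].
  rewrite qdist_axis_rot_axis_diag by auto.
  replace (4 * eps) with (2 * (2 * eps)) by ring; rewrite (cosh_gap_double (2 * eps)).
  set (q := qdist (axis t) (rot_axis C S s)) in *.
  assert (q0 : 0 <= q) by (unfold q; rewrite <- cosh_gap_hdist; auto using axis_inH, cosh_gap_ge0).
  pose proof (cosh_gap_ge0 (2 * eps)).
  pose proof (qdist_axis_rot_axis_ge C S t s HCS) as Hq; fold q in Hq.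
  assert (Hlt : cosh_gap (2 * l) <= cosh_gap (2 * t))
    by (apply cosh_gap_le_abs; [lra | rewrite Rabs_mult, Rabs_right; lra]).
  pose proof (cosh_gap_ge0 (2 * l)); pose proof (pow2_ge_0 S).
  assert (S^2 * cosh_gap (2 * l) <= 4 * S^2 * C^2 * cosh_gap (2 * t)).
  { apply Rle_trans with (S^2 * cosh_gap (2 * t)); [apply Rmult_le_compat_l; auto|].
    assert (0 <= (4 * C^2 - 1) * (S^2 * cosh_gap (2 * t)))
      by (apply Rmult_le_pos; [lra | apply Rmult_le_pos; auto using cosh_gap_ge0]).
    lra. }
  assert (q ^ 2 <= cosh_gap (2 * eps) ^ 2) by (apply pow_incr; lra).
  lra.
Qed.

Lemma rot_axis_opp C S t : C^2 + S^2 = 1 -> rot_axis C S (- t) = rot_axis (- S) C t.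
Proof.
  intros H; unfold rot_axis.
  replace (axis (- t)) with (act (rot 0 1) (axis t))
    by (unfold axis; rewrite act_inversion_axis, exp_Ropp; auto using exp_pos).
  rewrite <- act_mmul; auto using axis_inH, det_rot.
  - f_equal; unfold mmul, rot; simpl; f_equal; ring.
  - apply det_rot; lra.
Qed.

(* Reversing [b] replaces [phi] by [phi + pi/2], so one orientation has [cos^2 phi >= 1/4]. *)
Lemma isom_lines_normal_form a b : isom_line a -> isom_line b -> a 0 = b 0 ->
  exists N C S sg, det N = 1 /\ C^2 + S^2 = 1 /\ 1/4 <= C^2 /\ (sg = 1 \/ sg = -1) /\
    (forall t, act N (a t) = axis t) /\ (forall t, act N (b (sg * t)) = rot_axis C S t).
Proof.
  intros Ha Hb Hab; destruct (isom_line_frame a Ha) as [N [HN HNa]].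
  assert (Hb' : isom_line (fun t => act N (b t))) by (apply isom_line_act; auto).
  assert (b0 : act N (b 0) = axis 0) by (rewrite <- Hab; auto).
  destruct (isom_line_rot_axis _ Hb' b0) as [C [S [HCS Hrot]]].
  destruct (Rle_lt_dec (1/4) (C^2)).
  - exists N, C, S, 1; repeat split; auto.
    intro t; rewrite Rmult_1_l; apply Hrot.
  - exists N, (- S), C, (-1); repeat split; auto; try lra.
    intro t; rewrite <- rot_axis_opp, Hrot by auto; unfold rot_axis; do 2 f_equal; ring.
Qed.

Section Trap.

Variables (Gamma : mat -> Prop) (L eps C S : R) (a b : R -> pt) (ea eb N : mat).

Hypothesis Gamma_det : forall h, Gamma h -> det h = 1.
Hypothesis Gamma_mmul : forall g h, Gamma g -> Gamma h -> Gamma (mmul g h).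
Hypothesis Gamma_minv : forall h, Gamma h -> Gamma (minv h).
Hypothesis systole : systole_gt Gamma (8 * eps).
Hypothesis eps_gt0 : 0 < eps.
Hypothesis L_gt : 8 * eps < L.
Hypotheses (a_line : isom_line a) (b_line : isom_line b).
Hypothesis lines_meet_once : forall t s, a t = b s -> t = 0.
Hypotheses (Gamma_ea : Gamma ea) (ea_transl : forall t, act ea (a t) = a (t + L)).
Hypotheses (Gamma_eb : Gamma eb) (eb_transl : forall t, act eb (b t) = b (t + L)).
Hypotheses (det_N : det N = 1) (CS1 : C^2 + S^2 = 1) (C_large : 1/4 <= C^2).
Hypotheses (N_a : forall t, act N (a t) = axis t) (N_b : forall t, act N (b t) = rot_axis C S t).

Let a_inH := proj1 a_line.
Let b_inH := proj1 b_line.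
Let det_ea := Gamma_det ea Gamma_ea.
Let det_eb := Gamma_det eb Gamma_eb.

Lemma hdist_ab t s : hdist (a t) (b s) = hdist (axis t) (rot_axis C S s).
Proof. rewrite <- N_a, <- N_b, hdist_act; auto. Qed.

Lemma hdist_ab_opp l : hdist (b (- l)) (a (- l)) = hdist (a l) (b l).
Proof.
  rewrite hdist_sym, !hdist_ab by auto.
  apply hdist_eq_qdist; auto using axis_inH, rot_axis_inH, hdist_ge0.
  rewrite cosh_gap_hdist, !qdist_axis_rot_axis_diag by auto using axis_inH, rot_axis_inH.
  replace (2 * - l) with (- (2 * l)) by ring; rewrite cosh_gap_opp; reflexivity.
Qed.

Lemma lines_meet_at0 : a 0 = b 0.
Proof.
  rewrite <- (act_minvK N (a 0)), <- (act_minvK N (b 0)), N_a, N_b by auto.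
  unfold rot_axis; rewrite axis0, act_rot_i; auto.
Qed.

Lemma act_ea_mmul z : inH z -> act ea (act (mmul (minv ea) eb) z) = act eb z.
Proof.
  intros Hz; assert (det (minv ea) = 1) by (rewrite det_minv; auto).
  rewrite act_mmul, act_minvKV; auto using act_inH.
Qed.

Lemma hdist_translation_quotient :
  let u := a (- (L / 2)) in
  hdist u (act (mmul (minv ea) eb) u) <= 2 * hdist (a (L / 2)) (b (L / 2)).
Proof.
  intros u; assert (Hu : inH u) by apply a_inH.
  assert (dg : det (mmul (minv ea) eb) = 1) by (rewrite det_mmul, det_minv, det_ea, det_eb; ring).
  rewrite <- (hdist_act ea), act_ea_mmul by auto using act_inH.
  unfold u; rewrite ea_transl; replace (- (L / 2) + L) with (L / 2) by field.
  apply Rle_trans with (hdist (a (L / 2)) (b (L / 2)) + hdist (b (L / 2)) (act eb u));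
    [apply hdist_triangle; auto using act_inH|].
  assert (E : b (L / 2) = act eb (b (- (L / 2)))) by (rewrite eb_transl; f_equal; field).
  rewrite E at 2; rewrite hdist_act, hdist_ab_opp by auto; lra.
Qed.

Lemma translations_not_equal : ~ (forall z, inH z -> act (mmul (minv ea) eb) z = z).
Proof.
  intros Hid.
  assert (E : a (0 + L) = b (0 + L))
    by (rewrite <- ea_transl, <- eb_transl, <- lines_meet_at0, <- act_ea_mmul, Hid; auto).
  apply lines_meet_once in E.
  lra.
Qed.

Lemma hdist_ab_half_ge : 4 * eps <= hdist (a (L / 2)) (b (L / 2)).
Proof.
  apply Rnot_lt_le; intro Hdel.
  pose proof hdist_translation_quotient as Hq; cbv zeta in Hq.
  destruct (classic (nontrivial (mmul (minv ea) eb))) as [nt|nt].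
  - pose proof (systole _ (Gamma_mmul _ _ (Gamma_minv _ Gamma_ea) Gamma_eb) nt (a (- (L / 2)))
                 (a_inH _)); lra.
  - apply translations_not_equal; intros z Hz.
    apply not_and_or in nt; destruct nt as [E|E]; apply NNPP in E; rewrite E;
      auto using act_mid, act_mneg_id.
Qed.

Lemma trap_param_lt t s : hdist (a t) (b s) < 2 * eps -> Rabs t < L / 2.
Proof.
  intros Hd; apply Rnot_le_lt; intro Ht.
  rewrite hdist_ab in Hd.
  pose proof (rot_axis_diag_close C S (L / 2) eps t s CS1 C_large ltac:(lra) ltac:(lra) Ht Hd).
  rewrite <- hdist_ab in H; pose proof hdist_ab_half_ge; lra.
Qed.

Lemma trap_hdist_le t s t' s' : hdist (a t) (b s) < 2 * eps -> hdist (a t') (b s') < 2 * eps ->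
  hdist (a t) (a t') <= L.
Proof.
  intros H H'; apply trap_param_lt, Rabs_def2 in H; apply trap_param_lt, Rabs_def2 in H'.
  rewrite (proj2 a_line); apply Rabs_le; lra.
Qed.

End Trap.

Lemma isom_line_inj c s t : isom_line c -> c s = c t -> s = t.
Proof.
  intros [Hin Hd] E; pose proof (Hd s t) as D; rewrite E, hdist_xx in D by auto.
  unfold Rabs in D; destruct (Rcase_abs (s - t)); lra.
Qed.

Lemma isom_line_reparam c sg t0 : isom_line c -> (sg = 1 \/ sg = -1) ->
  isom_line (fun t => c (sg * t + t0)) /\
  forall z, (exists t, z = c t) <-> (exists t, z = c (sg * t + t0)).
Proof.
  intros [Hin Hd] Hsg; split; [split|]; auto.
  - intros s t; rewrite Hd; replace (sg * s + t0 - (sg * t + t0)) with (sg * (s - t)) by ring.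
    rewrite Rabs_mult; destruct Hsg as [->| ->];
      [rewrite Rabs_R1 | rewrite (Rabs_left (-1)) by lra]; ring.
  - intro z; split; [intros [t ->]; exists (sg * (t - t0)) | intros [t ->]; eauto].
    f_equal; destruct Hsg as [->| ->]; ring.
Qed.

Lemma projects_to_line_through Gamma g G p : projects_to Gamma g G -> G p ->
  exists c, isom_line c /\ c 0 = p /\ forall z, G z <-> exists t, z = c t.
Proof.
  intros [[c [Hin [Hd HG]]] _] Hp; destruct (proj1 (HG p) Hp) as [t0 ->].
  destruct (isom_line_reparam c 1 t0 (conj Hin Hd) (or_introl eq_refl)) as [Hc' Himg].
  exists (fun t => c (1 * t + t0)); split; [|split]; auto.
  - f_equal; ring.
  - intro z; rewrite HG; apply Himg.
Qed.

Lemma trap_seg_length_lt (Gamma : mat -> Prop) (g : mat) (L : R)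
  (alpha beta : pt -> Prop) (p : pt) (eps : R) :
  closed_surface_group Gamma -> Gamma g -> nontrivial g -> transl_length g L ->
  projects_to Gamma g alpha -> projects_to Gamma g beta ->
  (forall q, (alpha q /\ beta q) <-> q = p) -> 0 < eps -> systole_gt Gamma (8 * eps) ->
  seg_length_lt (trap alpha beta eps) (L + 4 * eps).
Proof.
  intros CSG Hg ntg TL Pa Pb Hint He Hsys.
  assert (CSG' := CSG); destruct CSG' as [Gdet [_ [Gmul [Ginv _]]]].
  assert (HL : 8 * eps < L) by (destruct TL as [_ [z [Hz <-]]]; apply Hsys; auto).
  destruct (proj2 (Hint p) eq_refl) as [pa pb].
  destruct (projects_to_line_through _ _ _ _ Pa pa) as [a [Ha [a0 Halpha]]].
  destruct (projects_to_line_through _ _ _ _ Pb pb) as [b0 [Hb0 [b00 Hbeta0]]].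
  destruct (isom_lines_normal_form a b0 Ha Hb0 ltac:(congruence))
    as [N [C [S [sg [HN [HCS [HC [Hsg [Na Nb]]]]]]]]].
  destruct (isom_line_reparam b0 sg 0 Hb0 Hsg) as [Hb Himg].
  set (b := fun t => b0 (sg * t + 0)) in *.
  assert (Nb' : forall t, act N (b t) = rot_axis C S t)
    by (intro t; unfold b; rewrite Rplus_0_r; auto).
  assert (Hbeta : forall z, beta z <-> exists t, z = b t) by (intro z; rewrite Hbeta0; apply Himg).
  destruct (projects_to_translation _ _ _ _ _ CSG Hg ntg TL Pa Ha Halpha) as [ea [Gea [_ Hea]]].
  destruct (projects_to_translation _ _ _ _ _ CSG Hg ntg TL Pb Hb Hbeta) as [eb [Geb [_ Heb]]].
  assert (meet : forall t s, a t = b s -> t = 0).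
  { intros t s E; apply (isom_line_inj a t 0 Ha); rewrite a0.
    apply Hint; split; [apply Halpha | apply Hbeta; rewrite E]; eauto. }
  exists L; split; [lra|].
  intros x y [Hx [bx [Hbx Hdx]]] [Hy [by' [Hby Hdy]]].
  apply Halpha in Hx as [tx ->]; apply Halpha in Hy as [ty ->].
  apply Hbeta in Hbx as [sx ->]; apply Hbeta in Hby as [sy ->].
  exact (trap_hdist_le Gamma L eps C S a b ea eb N Gdet Gmul Ginv Hsys He HL Ha Hb meet
           Gea Hea Geb Heb HN HCS HC Na Nb' tx sx ty sy Hdx Hdy).
Qed.

Theorem lemma3p1
  (Gamma : mat -> Prop) (g : mat) (Lgamma : R)
  (alpha beta : pt -> Prop) (p : pt) (eps : R) :
  closed_surface_group Gamma ->
  Gamma g -> nontrivial g ->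
  transl_length g Lgamma ->
  projects_to Gamma g alpha ->
  projects_to Gamma g beta ->
  (forall q, (alpha q /\ beta q) <-> q = p) ->
  0 < eps ->
  systole_gt Gamma (8 * eps) ->
  seg_length_lt (trap alpha beta eps) (Lgamma + 4 * eps) /\
  seg_length_lt (trap beta alpha eps) (Lgamma + 4 * eps).
Proof.
  intros CSG Hg ntg TL Pa Pb Hint He Hsys; split.
  - apply (trap_seg_length_lt Gamma g Lgamma alpha beta p); auto.
  - apply (trap_seg_length_lt Gamma g Lgamma beta alpha p); auto.
    intro q; rewrite <- Hint; tauto.
Qed.
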